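(* Let $k\ge 2$, and let $p,q,\rho$ be real parameters with $p+(k-1)q=1$ such that all quantities below are nonnegative. Consider $k$-JRR: $n$ contributors with values in $[k]=\{1,\dots,k\}$ are partitioned into disjoint groups of two, and a group whose true values are $(v_1,v_2)$ reports $(v_1',v_2')\in[k]^2$ with probability $p^2+\rho pq$ if $v_1'=v_1,v_2'=v_2$; $pq-\frac{1}{k-1}\rho pq$ if $v_1'=v_1,v_2'\ne v_2$; $pq-\frac{1}{k-1}\rho pq$ if $v_1'\ne v_1,v_2'=v_2$; and $q^2+\frac{1}{(k-1)^2}\rho pq$ if $v_1'\ne v_1,v_2'\ne v_2$. Then each contributor reports its true value with probability $p$ and each specific other value with probability $q$. Consequently, if $n_v$ is the number of contributors with true value $v$ and $I_v$ the number of reports equal to $v$, then $\hat n_v=(I_v-nq)/(p-q)$ satisfies $\mathrm{E}[\hat n_v]=n_v$ for every $v\in[k]$ (assuming $p\ne q$). *)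

From mathcomp Require Import all_boot all_order all_algebra.
Set Implicit Arguments. Unset Strict Implicit. Unset Printing Implicit Defensive.
Import Order.TTheory GRing.Theory Num.Theory.
Local Open Scope ring_scope.

Definition jrr_kernel (R : realFieldType) (k : nat) (p q rho : R)
  (v w : 'I_k * 'I_k) : R :=
  let: (v1, v2) := v in let: (w1, w2) := w in
  if (w1 == v1) && (w2 == v2) then p ^+ 2 + rho * p * q
  else if (w1 == v1) && (w2 != v2) then p * q - (k.-1)%:R^-1 * rho * p * q
  else if (w1 != v1) && (w2 == v2) then p * q - (k.-1)%:R^-1 * rho * p * q
  else q ^+ 2 + ((k.-1)%:R ^+ 2)^-1 * rho * p * q.

(* m groups, group i has true values x i; reports y : one pair per group,
   drawn independently across groups. *)
Definition jrr_prob (R : realFieldType) (k m : nat) (p q rho : R)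
  (x : 'I_m -> 'I_k * 'I_k) (y : {ffun 'I_m -> 'I_k * 'I_k}) : R :=
  \prod_(i < m) jrr_kernel p q rho (x i) (y i).

Definition true_count (k m : nat) (x : 'I_m -> 'I_k * 'I_k) (v : 'I_k) : nat :=
  \sum_(i < m) (((x i).1 == v) + ((x i).2 == v))%N.

Definition report_count (k m : nat) (y : {ffun 'I_m -> 'I_k * 'I_k}) (v : 'I_k)
  : nat := \sum_(i < m) (((y i).1 == v) + ((y i).2 == v))%N.

Definition nhat (R : realFieldType) (k m : nat) (p q : R)
  (y : {ffun 'I_m -> 'I_k * 'I_k}) (v : 'I_k) : R :=
  ((report_count y v)%:R - (2 * m)%N%:R * q) / (p - q).

Definition E_nhat (R : realFieldType) (k m : nat) (p q rho : R)
  (x : 'I_m -> 'I_k * 'I_k) (v : 'I_k) : R :=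
  \sum_(y : {ffun 'I_m -> 'I_k * 'I_k}) jrr_prob p q rho x y * nhat p q y v.

(* With the first report fixed, the [k] entries of the pair kernel sum to [p]
   or [q]: the correction on the [k - 1] entries with a wrong second report
   exactly cancels the one on the remaining entry, and the kernel is symmetric
   under swapping the two contributors.  Hence each contributor reports [c]
   with probability [q + (p - q) [true value = c]], and as groups report
   independently, linearity of expectation gives [E[I_c] = n q + (p - q) n_c].
   The nonnegativity hypotheses only make the kernel a probability; the
   identities themselves are algebraic and do not use them. *)
From mathcomp Require Import all_boot all_order all_algebra.
From mathcomp Require Import ring.

Set Implicit Arguments.
Unset Strict Implicit.
Unset Printing Implicit Defensive.
Import Order.TTheory GRing.Theory Num.Theory.
Local Open Scope ring_scope.

Lemma sum_ord_const_but1 (R : nmodType) (k : nat) (v : 'I_k) (F : 'I_k -> R) (c : R) :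
  (forall w, w != v -> F w = c) -> \sum_(w < k) F w = F v + c *+ k.-1.
Proof.
move=> Fw; rewrite (bigD1 v) //= (eq_bigr (fun _ => c)) ?sumr_const.
  by rewrite cardC1 card_ord.
by move=> w /Fw.
Qed.

Lemma sumr_pair (R : nmodType) (I J : finType) (F : I * J -> R) :
  \sum_w F w = \sum_i \sum_j F (i, j).
Proof. by rewrite pair_bigA; apply: eq_bigr => -[]. Qed.

Section ProductDistribution.
Variables (R : comPzSemiRingType) (I J : finType) (F : I -> J -> R).
Hypothesis F_sum1 : forall i, \sum_j F i j = 1.

Lemma sum_prod_ffun_eq1 : \sum_(y : {ffun I -> J}) \prod_i F i (y i) = 1.
Proof. by rewrite -(bigA_distr_bigA F) big1. Qed.

(* Only the [i]-th factor of the product sees [G i]; the others integrate to 1. *)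
Lemma expect_sum_prod_ffun (G : I -> J -> R) :
  \sum_(y : {ffun I -> J}) (\prod_i F i (y i)) * \sum_i G i (y i)
  = \sum_i \sum_j F i j * G i j.
Proof.
under eq_bigr => y _ do rewrite mulr_sumr.
rewrite exchange_big /=; apply: eq_bigr => i _.
pose FG j w := if j == i then F j w * G j w else F j w.
transitivity (\sum_(y : {ffun I -> J}) \prod_j FG j (y j)).
  apply: eq_bigr => y _.
  rewrite (bigD1 i) //= [RHS](bigD1 i) //= /FG eqxx mulrAC; congr (_ * _).
  by apply: eq_bigr => j /negbTE ->.
rewrite -(bigA_distr_bigA FG) (bigD1 i) //= [X in _ * X]big1 ?mulr1.
  by apply: eq_bigr => w _; rewrite /FG eqxx.
by move=> j /negbTE ji; rewrite -(F_sum1 j); apply: eq_bigr => w _; rewrite /FG ji.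
Qed.

End ProductDistribution.

Definition pair_count (k : nat) (w : 'I_k * 'I_k) (c : 'I_k) : nat :=
  ((w.1 == c) + (w.2 == c))%N.

Section JRRKernel.
Variables (R : realFieldType) (k : nat) (p q rho : R).
Hypotheses (k_gt1 : (1 < k)%N) (pq_sum1 : p + (k.-1)%:R * q = 1).

Local Notation K := (jrr_kernel p q rho).

Lemma jrr_kernel_swap (v1 v2 w1 w2 : 'I_k) :
  K (v2, v1) (w2, w1) = K (v1, v2) (w1, w2).
Proof. by rewrite /jrr_kernel; case: eqP; case: eqP. Qed.

Lemma jrr_kernel_marginal1 (v : 'I_k * 'I_k) (w1 : 'I_k) :
  \sum_(w2 < k) K v (w1, w2) = if w1 == v.1 then p else q.
Proof.
have k1_neq0 : (k.-1)%:R != 0 :> R by rewrite pnatr_eq0 -lt0n -ltnS prednK // ltnW.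
case: v => v1 v2 /=; case: (eqVneq w1 v1) => _ /=.
  rewrite (sum_ord_const_but1 (v := v2) (c := p * q - (k.-1)%:R^-1 * rho * p * q)).
    by rewrite eqxx -mulr_natr -[RHS]mulr1 -[in RHS]pq_sum1; field.
  by move=> w /negbTE ->.
rewrite (sum_ord_const_but1 (v := v2) (c := q ^+ 2 + ((k.-1)%:R ^+ 2)^-1 * rho * p * q)).
  by rewrite eqxx -mulr_natr -[RHS]mulr1 -[in RHS]pq_sum1; field.
by move=> w /negbTE ->.
Qed.

Lemma jrr_kernel_marginal2 (v : 'I_k * 'I_k) (w2 : 'I_k) :
  \sum_(w1 < k) K v (w1, w2) = if w2 == v.2 then p else q.
Proof.
case: v => v1 v2; rewrite -(jrr_kernel_marginal1 (v2, v1)).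
by apply: eq_bigr => w1 _; rewrite jrr_kernel_swap.
Qed.

Lemma jrr_kernel_sum1 (v : 'I_k * 'I_k) : \sum_w K v w = 1.
Proof.
rewrite sumr_pair; under eq_bigr => w1 _ do rewrite jrr_kernel_marginal1.
rewrite (sum_ord_const_but1 (v := v.1) (c := q)) /=; last by move=> w /negbTE ->.
by rewrite eqxx -mulr_natl.
Qed.

Lemma jrr_expect_report1 (v : 'I_k * 'I_k) (c : 'I_k) :
  \sum_w K v w * (w.1 == c)%:R = q + (p - q) * (v.1 == c)%:R.
Proof.
rewrite sumr_pair (bigD1 c) //= [X in _ + X]big1 => [|w1 /negbTE w1c]; last first.
  by apply: big1 => w2 _; rewrite w1c mulr0.
under eq_bigr => w2 _ do rewrite eqxx mulr1.
by rewrite jrr_kernel_marginal1 addr0 eq_sym; case: (v.1 == c) => /=; ring.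
Qed.

Lemma jrr_expect_pair_count (v : 'I_k * 'I_k) (c : 'I_k) :
  \sum_w K v w * (pair_count w c)%:R = q *+ 2 + (p - q) * (pair_count v c)%:R.
Proof.
under eq_bigr => w _ do rewrite /pair_count natrD mulrDr.
rewrite big_split /= jrr_expect_report1.
have -> : \sum_w K v w * (w.2 == c)%:R = q + (p - q) * (v.2 == c)%:R.
  case: v => v1 v2; rewrite -(jrr_expect_report1 (v2, v1)).
  rewrite !sumr_pair exchange_big.
  by apply: eq_bigr => w2 _; apply: eq_bigr => w1 _; rewrite jrr_kernel_swap.
by rewrite /pair_count natrD; ring.
Qed.

End JRRKernel.

Theorem mainTheorem9 (R : realFieldType) (k : nat) (p q rho : R)
  (hk : (2 <= k)%N)
  (hpq : p + (k.-1)%:R * q = 1)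
  (hp : 0 <= p) (hq : 0 <= q)
  (h1 : 0 <= p ^+ 2 + rho * p * q)
  (h2 : 0 <= p * q - (k.-1)%:R^-1 * rho * p * q)
  (h3 : 0 <= q ^+ 2 + ((k.-1)%:R ^+ 2)^-1 * rho * p * q) :
  (* marginals: each contributor reports its true value w.p. p, any other w.p. q *)
  (forall (v : 'I_k * 'I_k) (w1 : 'I_k),
      \sum_(w2 < k) jrr_kernel p q rho v (w1, w2) = if w1 == v.1 then p else q)
  /\ (forall (v : 'I_k * 'I_k) (w2 : 'I_k),
      \sum_(w1 < k) jrr_kernel p q rho v (w1, w2) = if w2 == v.2 then p else q)
  (* unbiasedness of the estimator, for any number m of groups (n = 2m) *)
  /\ (p != q -> forall (m : nat) (x : 'I_m -> 'I_k * 'I_k) (v : 'I_k),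
      E_nhat p q rho x v = (true_count x v)%:R).
Proof.
split; first exact: jrr_kernel_marginal1.
split; first exact: jrr_kernel_marginal2.
move=> p_neq_q m x v; pose F i := jrr_kernel p q rho (x i).
have F_sum1 i : \sum_w F i w = 1 by exact: jrr_kernel_sum1.
rewrite /E_nhat /nhat /jrr_prob.
under eq_bigr => y _ do rewrite mulrA.
rewrite -mulr_suml; under eq_bigr => y _ do rewrite mulrBr.
rewrite sumrB -mulr_suml (sum_prod_ffun_eq1 F_sum1) mul1r.
under eq_bigr => y _ do rewrite /report_count natr_sum.
rewrite (expect_sum_prod_ffun F_sum1 (fun i w => (pair_count w v)%:R)).
under eq_bigr => i _ do rewrite jrr_expect_pair_count //.
rewrite big_split /= -mulr_sumr sumr_const card_ord /true_count natr_sum.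
by rewrite -mulrnA mulr_natl addrAC subrr add0r mulrC mulKf // subr_eq0.
Qed.
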